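(* Let $\mathbf x_1,\dots,\mathbf x_l\in\mathbb{R}^n$, $y_1,\dots,y_l\in\{1,-1\}$, $\bar{\mathbf x}_i=y_i\mathbf x_i$. For $s>0$ let $\mathcal F_s=\{\mathbf w\in\mathbb{R}^n:\sum_{i=1}^l[1-y_i\mathbf w^T\mathbf x_i]_+\le s\}$ and, when $\mathcal F_s\neq\emptyset$, let $\mathbf w^*(s)$ be the optimal solution of $\min_{\mathbf w\in\mathcal F_s}\frac12\|\mathbf w\|^2$. Let $s_a>s_b>0$, let $\mathbf w^*(s_a)$ be the optimal solution at $s=s_a$ (assumed nonzero) and $\hat{\mathbf w}(s_b)\in\mathcal F_{s_b}$ a feasible point at $s=s_b$. Define $$\rho=-\|\mathbf w^*(s_a)\|^2+\tfrac12\langle\mathbf w^*(s_a),\hat{\mathbf w}(s_b)\rangle,\qquad \mathbf v^\perp=\mathbf v-\tfrac{\mathbf v^T\mathbf w^*(s_a)}{\|\mathbf w^*(s_a)\|^2}\mathbf w^*(s_a)\ \ (\mathbf v\in\mathbb{R}^n),$$ $$\ell_i=-\tfrac{\langle\mathbf w^*(s_a),\bar{\mathbf x}_i\rangle}{\|\mathbf w^*(s_a)\|^2}\rho+\tfrac12\langle\hat{\mathbf w}(s_b),\bar{\mathbf x}_i\rangle-\|\bar{\mathbf x}_i^\perp\|\sqrt{\tfrac14\|\hat{\mathbf w}(s_b)\|^2-\tfrac{\rho^2}{\|\mathbf w^*(s_a)\|^2}},$$ and $u_i=\tfrac12\big(\langle\hat{\mathbf w}(s_b),\bar{\mathbf x}_i\rangle+\|\hat{\mathbf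 w}(s_b)\|\|\bar{\mathbf x}_i\|\big)$ if $\langle\mathbf w^*(s_a),\bar{\mathbf x}_i\rangle\ge-\tfrac{2\|\bar{\mathbf x}_i\|}{\|\hat{\mathbf w}(s_b)\|}\rho$, and otherwise $$u_i=-\tfrac{\langle\mathbf w^*(s_a),\bar{\mathbf x}_i\rangle}{\|\mathbf w^*(s_a)\|^2}\rho+\tfrac12\langle\hat{\mathbf w}(s_b),\bar{\mathbf x}_i\rangle+\|\bar{\mathbf x}_i^\perp\|\sqrt{\tfrac14\|\hat{\mathbf w}(s_b)\|^2-\tfrac{\rho^2}{\|\mathbf w^*(s_a)\|^2}}.$$ Then for all $s\in[s_b,s_a]$: if $\langle\mathbf w^*(s_a),\bar{\mathbf x}_i\rangle>\tfrac{2\|\bar{\mathbf x}_i\|}{\|\hat{\mathbf w}(s_b)\|}\rho$ and $\ell_i>1$, then $\langle\mathbf w^*(s),\bar{\mathbf x}_i\rangle>1$ (i.e., $i\in\mathcal R$); and if $u_i<1$, then $\langle\mathbf w^*(s),\bar{\mathbf x}_i\rangle<1$ (i.e., $i\in\mathcal L$).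
   Context: $[t]_+=\max\{t,0\}$; $\|\cdot\|$ is the Euclidean norm. For the parameter $s$, $\mathcal R=\{i:\langle\mathbf w^*(s),\bar{\mathbf x}_i\rangle>1\}$ and $\mathcal L=\{i:\langle\mathbf w^*(s),\bar{\mathbf x}_i\rangle<1\}$ (non-support vectors). *)

From mathcomp Require Import all_boot all_order all_algebra.
Set Implicit Arguments. Unset Strict Implicit. Unset Printing Implicit Defensive.
Import Order.TTheory GRing.Theory Num.Theory.
Local Open Scope ring_scope.

Section SVM.
Variables (R : rcfType) (n : nat).

Definition dotp (u v : 'rV[R]_n) : R := \sum_(j < n) u 0 j * v 0 j.
Definition enorm (u : 'rV[R]_n) : R := Num.sqrt (dotp u u).

Definition hinge (t : R) : R := Num.max t 0.

Variable l : nat.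
Variables (x : 'I_l -> 'rV[R]_n) (y : 'I_l -> R).

Definition xbar (i : 'I_l) : 'rV[R]_n := y i *: x i.

Definition feasible (s : R) (w : 'rV[R]_n) : Prop :=
  \sum_(i < l) hinge (1 - y i * dotp w (x i)) <= s.

Definition optimal (s : R) (w : 'rV[R]_n) : Prop :=
  feasible s w /\
  forall v, feasible s v -> (enorm w) ^+ 2 / 2 <= (enorm v) ^+ 2 / 2.

(* rho, perp, l_i, u_i, given wa = w*(s_a) and wh = w_hat(s_b) *)
Definition rho (wa wh : 'rV[R]_n) : R :=
  - (enorm wa) ^+ 2 + dotp wa wh / 2.

Definition perp (wa v : 'rV[R]_n) : 'rV[R]_n :=
  v - (dotp v wa / (enorm wa) ^+ 2) *: wa.

Definition sqrt_term (wa wh : 'rV[R]_n) : R :=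
  Num.sqrt ((enorm wh) ^+ 2 / 4 - (rho wa wh) ^+ 2 / (enorm wa) ^+ 2).

Definition lower_i (wa wh : 'rV[R]_n) (i : 'I_l) : R :=
  - (dotp wa (xbar i) / (enorm wa) ^+ 2) * rho wa wh
  + dotp wh (xbar i) / 2
  - enorm (perp wa (xbar i)) * sqrt_term wa wh.

Definition upper_i (wa wh : 'rV[R]_n) (i : 'I_l) : R :=
  if dotp wa (xbar i) >= - (2 * enorm (xbar i) / enorm wh) * rho wa wh
  then (dotp wh (xbar i) + enorm wh * enorm (xbar i)) / 2
  else - (dotp wa (xbar i) / (enorm wa) ^+ 2) * rho wa wh
       + dotp wh (xbar i) / 2
       + enorm (perp wa (xbar i)) * sqrt_term wa wh.

End SVM.

From mathcomp Require Import all_boot all_order all_algebra.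
From mathcomp Require Import ring lra.
Import Order.TTheory GRing.Theory Num.Theory.
Set Implicit Arguments. Unset Strict Implicit.
Local Open Scope ring_scope.

(* Optimality of w*(s) gives the variational inequality <w*(s), v - w*(s)> >= 0
   for every v in F_s.  Since F_{s_b} <= F_s <= F_{s_a}, taking v = w^(s_b) puts
   w*(s) in the ball |w - w^/2| <= |w^|/2, and the inequality at s_a with
   v = w*(s) puts it in the halfspace <w*(s_a), w> >= |w*(s_a)|^2.  Over the
   ball, <w, xbar_i> is at most the first formula for u_i.  When the extremal
   point of the ball in direction -xbar_i (resp. xbar_i) violates the
   halfspace, the extremum over the intersection is attained on the circle
   where the hyperplane cuts the sphere, which gives l_i (resp. the second
   formula for u_i); splitting along w*(s_a) and its orthogonal complement
   reduces this to an inequality in the plane. *)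

Section Dotp.
Variables (R : rcfType) (n : nat).
Implicit Types a u v w : 'rV[R]_n.

Lemma dotpC u v : dotp u v = dotp v u.
Proof. by apply: eq_bigr => j _; rewrite mulrC. Qed.

Lemma dotpDl u v w : dotp (u + v) w = dotp u w + dotp v w.
Proof. by rewrite /dotp -big_split; apply: eq_bigr => j _; rewrite mxE mulrDl. Qed.

Lemma dotpZl k u v : dotp (k *: u) v = k * dotp u v.
Proof. by rewrite /dotp mulr_sumr; apply: eq_bigr => j _; rewrite mxE mulrA. Qed.

Lemma dotpNl u v : dotp (- u) v = - dotp u v.
Proof. by rewrite -scaleN1r dotpZl mulN1r. Qed.

Lemma dotpBl u v w : dotp (u - v) w = dotp u w - dotp v w.
Proof. by rewrite dotpDl dotpNl. Qed.

Lemma dotpDr u v w : dotp w (u + v) = dotp w u + dotp w v.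
Proof. by rewrite dotpC dotpDl !(dotpC w). Qed.

Lemma dotpZr k u v : dotp v (k *: u) = k * dotp v u.
Proof. by rewrite dotpC dotpZl dotpC. Qed.

Lemma dotpNr u v : dotp v (- u) = - dotp v u.
Proof. by rewrite dotpC dotpNl dotpC. Qed.

Lemma dotpBr u v w : dotp w (u - v) = dotp w u - dotp w v.
Proof. by rewrite dotpDr dotpNr. Qed.

Lemma dotp0l v : dotp 0 v = 0.
Proof. by rewrite /dotp big1 // => j _; rewrite mxE mul0r. Qed.

Lemma dotp0r v : dotp v 0 = 0.
Proof. by rewrite dotpC dotp0l. Qed.

Lemma dotp_ge0 u : 0 <= dotp u u.
Proof. by apply: sumr_ge0 => j _; rewrite -expr2 sqr_ge0. Qed.

Lemma dotp_eq0 u : (dotp u u == 0) = (u == 0).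
Proof.
apply/idP/eqP => [|->]; last by rewrite dotp0l.
rewrite psumr_eq0 => [/allP u0|j _]; last by rewrite -expr2 sqr_ge0.
apply/matrixP => i j; rewrite ord1 mxE.
by have /= := u0 j (mem_index_enum j); rewrite mulf_eq0 orbb => /eqP.
Qed.

Lemma dotp_gt0 u : (0 < dotp u u) = (u != 0).
Proof. by rewrite lt_def dotp_eq0 dotp_ge0 andbT. Qed.

Lemma enorm_sqr u : enorm u ^+ 2 = dotp u u.
Proof. exact: sqr_sqrtr (dotp_ge0 u). Qed.

Lemma enorm_ge0 u : 0 <= enorm u.
Proof. exact: sqrtr_ge0. Qed.

Lemma enormN u : enorm (- u) = enorm u.
Proof. by rewrite /enorm dotpNl dotpNr opprK. Qed.

Lemma dotp_sqr_le u v : dotp u v ^+ 2 <= dotp u u * dotp v v.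
Proof.
have [v0|vN0] := eqVneq v 0.
  by rewrite v0 dotp0r dotp0l mulr0 expr0n.
have vv : 0 < dotp v v by rewrite dotp_gt0.
(* the squared norm of the component of u orthogonal to v *)
have := dotp_ge0 (u - (dotp u v / dotp v v) *: v).
rewrite !(dotpBl, dotpBr, dotpZl, dotpZr) (dotpC v u).
set k := dotp u v / dotp v v.
have kvv : k * dotp v v = dotp u v by rewrite /k divfK // gt_eqF.
nra.
Qed.

Lemma dotp_le_enorm u v : dotp u v <= enorm u * enorm v.
Proof.
have := dotp_sqr_le u v; rewrite -!enorm_sqr -exprMn => le_sqr.
have := mulr_ge0 (enorm_ge0 u) (enorm_ge0 v); nra.
Qed.

Lemma perpN a v : perp a (- v) = - perp a v.
Proof. by rewrite /perp dotpNl mulNr scaleNr opprD. Qed.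

Lemma dotp_perp a u v : a != 0 ->
  dotp (perp a u) (perp a v) = dotp u v - dotp u a * dotp v a / dotp a a.
Proof.
rewrite -dotp_gt0 => aa; rewrite /perp enorm_sqr.
rewrite !(dotpBl, dotpBr, dotpZl, dotpZr) (dotpC a v).
by field; rewrite gt_eqF.
Qed.

End Dotp.

Lemma hinge_convex (R : rcfType) (k a b : R) : 0 <= k <= 1 ->
  hinge ((1 - k) * a + k * b) <= (1 - k) * hinge a + k * hinge b.
Proof.
case/andP=> k0 k1; have kc_ge0 : 0 <= 1 - k by rewrite subr_ge0.
rewrite /hinge ge_max; apply/andP; split.
  by apply: lerD; apply: ler_wpM2l; rewrite // le_max lexx.
by apply: addr_ge0; apply: mulr_ge0; rewrite // le_max lexx orbT.
Qed.

Section Feasibility.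
Variables (R : rcfType) (n l : nat) (x : 'I_l -> 'rV[R]_n) (y : 'I_l -> R).
Implicit Types (s : R) (v w : 'rV[R]_n).

Lemma feasible_le s1 s2 w : s1 <= s2 -> feasible x y s1 w -> feasible x y s2 w.
Proof. by move=> le_s ?; apply: le_trans le_s. Qed.

Lemma feasible_convex s v w k : feasible x y s w -> feasible x y s v ->
  0 <= k <= 1 -> feasible x y s (w + k *: (v - w)).
Proof.
rewrite /feasible => fw fv /andP[k0 k1].
apply: le_trans (_ : (1 - k) * s + k * s <= s); last by lra.
apply: le_trans (lerD (ler_wpM2l _ fw) (ler_wpM2l k0 fv)); last by rewrite subr_ge0.
rewrite !mulr_sumr -big_split; apply: ler_sum => i _.
rewrite dotpDl dotpZl dotpBl.
have -> : 1 - y i * (dotp w (x i) + k * (dotp v (x i) - dotp w (x i)))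
  = (1 - k) * (1 - y i * dotp w (x i)) + k * (1 - y i * dotp v (x i)) by ring.
by apply: hinge_convex; rewrite k0.
Qed.

Lemma optimal_dotp_le s w v : optimal x y s w -> feasible x y s v ->
  dotp w w <= dotp w v.
Proof.
case=> fw w_min fv; rewrite -subr_ge0 -dotpBr leNgt; apply/negP => d_lt0.
set d := dotp w (v - w) in d_lt0; set e := dotp (v - w) (v - w).
have e0 : 0 <= e := dotp_ge0 _.
have ed0 : 0 < e - d by lra.
(* a step in (0, 1] along which the norm strictly decreases *)
set k := - d / (e - d).
have k_ed : k * (e - d) = - d by rewrite /k divfK // gt_eqF.
have k0 : 0 < k by rewrite divr_gt0 // oppr_gt0.
have k1 : k <= 1 by nra.
have k01 : 0 <= k <= 1 by rewrite ltW.
have := w_min _ (feasible_convex fw fv k01).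
have expand u : dotp (w + k *: u) (w + k *: u)
    = dotp w w + 2 * k * dotp w u + k ^+ 2 * dotp u u.
  by rewrite !(dotpDl, dotpDr, dotpZl, dotpZr) (dotpC u w); ring.
rewrite !enorm_sqr expand -/d -/e.
nra.
Qed.

End Feasibility.

(* Coordinates of the cap problem in the plane spanned by a and the orthogonal
   part of b: A = |a|^2, t = <a, z>, q = |z_perp|, b = <a, b>, p = |b_perp|,
   nb = |b|, and (-rh, S) is where the line t = -rh meets the circle
   A q^2 + t^2 = A r^2. *)
Lemma cap_cross_le (R : realDomainType) (A b rh p S r nb : R) :
  0 < A -> 0 <= p -> 0 <= S -> 0 <= r -> 0 <= nb ->
  A * S ^+ 2 + rh ^+ 2 = A * r ^+ 2 -> A * nb ^+ 2 = b ^+ 2 + A * p ^+ 2 ->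
  nb * rh < b * r -> p * rh <= b * S.
Proof.
move=> A_gt0 p_ge0 S_ge0 r_ge0 nb_ge0 S_def nb_def angle.
have sqr_diff : A * ((b * S) ^+ 2 - (p * rh) ^+ 2) = A * (b * r) ^+ 2 - A * (nb * rh) ^+ 2.
  have -> : A * (b * r) ^+ 2 = b ^+ 2 * (A * r ^+ 2) by ring.
  have -> : A * (nb * rh) ^+ 2 = (A * nb ^+ 2) * rh ^+ 2 by ring.
  by rewrite -S_def nb_def; ring.
have [rh_le0|rh_gt0] := lerP rh 0.
  have prh_le0 : p * rh <= 0 by rewrite mulr_ge0_le0.
  have [bS_ge0|bS_lt0] := lerP 0 (b * S); first exact: le_trans bS_ge0.
  have b_lt0 : b < 0.
    by rewrite ltNge; apply: contraTN bS_lt0 => b_ge0; rewrite -leNgt mulr_ge0.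
  have br_le0 : b * r <= 0 by rewrite mulr_le0_ge0 // ltW.
  have : (b * r) ^+ 2 < (nb * rh) ^+ 2.
    rewrite -sqrrN -[X in _ < X]sqrrN ltr_pXn2r ?nnegrE ?oppr_ge0 ?ltrN2 //.
    by rewrite mulr_ge0_le0.
  move=> lt_sqr; have : (b * S) ^+ 2 < (p * rh) ^+ 2.
    by rewrite -subr_lt0 -(pmulr_rlt0 _ A_gt0) sqr_diff subr_lt0 ltr_pM2l.
  by rewrite -sqrrN -[X in _ < X]sqrrN ltr_pXn2r ?nnegrE ?oppr_ge0 ?ltrN2 //; apply: ltW.
have nbrh_ge0 : 0 <= nb * rh by rewrite mulr_ge0 // ltW.
have br_gt0 : 0 < b * r := le_lt_trans nbrh_ge0 angle.
have b_gt0 : 0 < b.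
  by rewrite ltNge; apply: contraTN br_gt0 => b_le0; rewrite -leNgt mulr_le0_ge0.
have : (nb * rh) ^+ 2 < (b * r) ^+ 2 by rewrite ltr_pXn2r // nnegrE ltW.
move=> lt_sqr; have : (p * rh) ^+ 2 < (b * S) ^+ 2.
  by rewrite -subr_gt0 -(pmulr_rgt0 _ A_gt0) sqr_diff subr_gt0 ltr_pM2l.
by rewrite ltr_pXn2r ?nnegrE ?mulr_ge0 ?(ltW rh_gt0) ?(ltW b_gt0) // => /ltW.
Qed.

Lemma cap_angle_sqr_lt (R : realDomainType) (A b rh r nb : R) :
  0 <= nb -> b ^+ 2 <= A * nb ^+ 2 -> nb * rh < b * r -> 0 < rh ->
  rh ^+ 2 < A * r ^+ 2.
Proof.
move=> nb_ge0 b_le angle rh_gt0.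
have nbrh_ge0 : 0 <= nb * rh by rewrite mulr_ge0 // ltW.
have : (nb * rh) ^+ 2 < (b * r) ^+ 2.
  by rewrite ltr_pXn2r // nnegrE ?(ltW (le_lt_trans nbrh_ge0 angle)).
rewrite !exprMn => lt_sqr.
have : nb ^+ 2 * rh ^+ 2 < nb ^+ 2 * (A * r ^+ 2).
  apply: (lt_le_trans lt_sqr).
  by rewrite mulrA (mulrC _ A); apply: ler_wpM2r; rewrite ?sqr_ge0.
have nb_gt0 : 0 < nb.
  rewrite lt_def nb_ge0 andbT; apply: contraTneq angle => nb0.
  move: b_le; rewrite nb0 expr0n /= mulr0 mul0r -leNgt => b_le0.
  suff -> : b = 0 by rewrite mul0r.
  by apply/eqP; rewrite -sqrf_eq0 eq_le b_le0 sqr_ge0.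
by rewrite ltr_pM2l // exprn_gt0.
Qed.

Lemma cap_scalar_ge (R : realDomainType) (A b rh t p q S r nb : R) :
  0 < A -> 0 <= p -> 0 <= q -> 0 <= S -> 0 <= r -> 0 <= nb ->
  A * S ^+ 2 + rh ^+ 2 = A * r ^+ 2 -> A * nb ^+ 2 = b ^+ 2 + A * p ^+ 2 ->
  nb * rh < b * r -> - rh <= t -> A * q ^+ 2 + t ^+ 2 <= A * r ^+ 2 ->
  0 <= b * (t + rh) + A * p * (S - q).
Proof.
move=> A_gt0 p_ge0 q_ge0 S_ge0 r_ge0 nb_ge0 S_def nb_def angle t_ge tq_ball.
have cross := cap_cross_le A_gt0 p_ge0 S_ge0 r_ge0 nb_ge0 S_def nb_def angle.
have [S_gt0|S_le0] := ltrP 0 S.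
  have plane_cs : - rh * t + A * S * q <= A * r ^+ 2.
    have := sqr_ge0 (rh + t); have := mulr_ge0 (ltW A_gt0) (sqr_ge0 (S - q)).
    nra.
  suff : 0 <= S * (b * (t + rh) + A * p * (S - q)) by nra.
  (* both summands are nonnegative, by [cap_cross_le] and [plane_cs] *)
  have -> : S * (b * (t + rh) + A * p * (S - q))
      = (b * S - p * rh) * (t + rh) + p * (rh * t + A * r ^+ 2 - A * S * q).
    by rewrite -S_def; ring.
  nra.
(* S = 0: the line is tangent to the circle and the cap is the point (-rh, 0) *)
have S0 : S = 0 by apply/eqP; rewrite eq_le S_le0 S_ge0.
rewrite S0 expr0n /= mulr0 add0r in S_def.
have rh_le0 : rh <= 0.
  have b_le : b ^+ 2 <= A * nb ^+ 2 by rewrite nb_def lerDl mulr_ge0 ?sqr_ge0 ?ltW.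
  rewrite leNgt; apply/negP => /(cap_angle_sqr_lt nb_ge0 b_le angle).
  by rewrite S_def ltxx.
have Aq_ge0 : 0 <= A * q ^+ 2 by rewrite mulr_ge0 ?sqr_ge0 ?ltW.
have t_sqr : t ^+ 2 <= (- rh) ^+ 2 by rewrite sqrrN; lra.
have t_le : t <= - rh.
  by move: t_sqr; rewrite ler_pXn2r // nnegrE ?oppr_ge0 //; apply: le_trans t_ge; rewrite oppr_ge0.
have t_eq : t = - rh by apply/eqP; rewrite eq_le t_le t_ge.
have q0 : q = 0.
  apply/eqP; rewrite -sqrf_eq0 eq_le sqr_ge0 andbT -(pmulr_rle0 _ A_gt0).
  by move: tq_ball; rewrite t_eq sqrrN S_def; lra.
by rewrite t_eq q0 S0 addNr !(mulr0, subrr, addr0).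
Qed.

Lemma dotp_cap_ge (R : rcfType) (n : nat) (a z b : 'rV[R]_n) (r rh : R) :
  a != 0 -> 0 <= r -> dotp z z <= r ^+ 2 -> - rh <= dotp a z ->
  enorm b * rh < dotp a b * r ->
  - (dotp a b / enorm a ^+ 2) * rh
    - enorm (perp a b) * Num.sqrt (r ^+ 2 - rh ^+ 2 / enorm a ^+ 2) <= dotp z b.
Proof.
move=> a0 r_ge0 z_ball t_ge angle; have A_gt0 : 0 < dotp a a by rewrite dotp_gt0.
rewrite enorm_sqr; set A := dotp a a in A_gt0 *.
set t := dotp a z in t_ge; set be := dotp a b in angle *.
set q := enorm (perp a z); set p := enorm (perp a b).
have zp_sqr : A * q ^+ 2 + t ^+ 2 <= A * r ^+ 2.
  rewrite /q enorm_sqr dotp_perp // (dotpC z a) -/t.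
  have -> : A * (dotp z z - t * t / A) + t ^+ 2 = A * dotp z z by field; rewrite gt_eqF.
  by rewrite ler_pM2l.
have b_sqr : A * enorm b ^+ 2 = be ^+ 2 + A * p ^+ 2.
  by rewrite /p !enorm_sqr dotp_perp // (dotpC b a) -/be -/A; field; rewrite gt_eqF.
have zb : dotp z b = dotp (perp a z) (perp a b) + be / A * t.
  by rewrite dotp_perp // (dotpC z a) (dotpC b a) -/t -/be -/A; field; rewrite gt_eqF.
have cs : - (q * p) <= dotp (perp a z) (perp a b).
  by have := dotp_le_enorm (- perp a z) (perp a b); rewrite enormN dotpNl -/q -/p; lra.
have rh_sqr : rh ^+ 2 <= A * r ^+ 2.
  have [rh_le0|rh_gt0] := lerP rh 0.
    have t_ge0 : 0 <= t by apply: le_trans t_ge; rewrite oppr_ge0.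
    have : (- rh) ^+ 2 <= t ^+ 2 by rewrite ler_pXn2r // nnegrE oppr_ge0.
    by have := mulr_ge0 (ltW A_gt0) (sqr_ge0 q); rewrite sqrrN; lra.
  apply/ltW/(cap_angle_sqr_lt (enorm_ge0 b) _ angle rh_gt0).
  by rewrite b_sqr lerDl mulr_ge0 ?sqr_ge0 ?ltW.
set S := Num.sqrt _.
have S_def : A * S ^+ 2 + rh ^+ 2 = A * r ^+ 2.
  rewrite sqr_sqrtr; first by field; rewrite gt_eqF.
  by rewrite subr_ge0 ler_pdivrMr // mulrC.
have := cap_scalar_ge A_gt0 (enorm_ge0 _) (enorm_ge0 _) (sqrtr_ge0 _) r_ge0
  (enorm_ge0 b) S_def b_sqr angle t_ge zp_sqr.
rewrite -/q -/p -/S => key.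
have : 0 <= (be * (t + rh) + A * p * (S - q)) / A by rewrite divr_ge0 // ltW.
have -> : (be * (t + rh) + A * p * (S - q)) / A = be / A * (t + rh) + p * (S - q).
  by field; rewrite gt_eqF.
rewrite zb; lra.
Qed.

Lemma ball_center_dist (R : rcfType) (n : nat) (wh w : 'rV[R]_n) :
  dotp w w <= dotp w wh -> enorm (w - 2^-1 *: wh) <= enorm wh / 2.
Proof.
move=> w_ball; rewrite -(ler_pXn2r (_ : 0 < 2)%N) ?nnegrE ?divr_ge0 ?enorm_ge0 //.
rewrite expr_div_n !enorm_sqr !(dotpBl, dotpBr, dotpZl, dotpZr) (dotpC wh w).
have -> : (2 : R) ^+ 2 = 4 by rewrite -natrX.
lra.
Qed.

Lemma dotp_ball_le (R : rcfType) (n : nat) (wh w b : 'rV[R]_n) :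
  dotp w w <= dotp w wh -> dotp w b <= (dotp wh b + enorm wh * enorm b) / 2.
Proof.
move=> /ball_center_dist w_ball.
have := dotp_le_enorm (w - 2^-1 *: wh) b; rewrite dotpBl dotpZl.
have := enorm_ge0 b; nra.
Qed.

Lemma enorm_center_gt0 (R : rcfType) (n : nat) (a wh w : 'rV[R]_n) : a != 0 ->
  dotp w w <= dotp w wh -> dotp a a <= dotp a w -> 0 < enorm wh.
Proof.
move=> a0 w_ball w_half; rewrite sqrtr_gt0 dotp_gt0; apply: contraTneq w_half => wh0.
move: w_ball; rewrite wh0 dotp0r => w_le0.
have /eqP -> : w == 0 by rewrite -dotp_eq0 eq_le w_le0 dotp_ge0.
by rewrite dotp0r -ltNge dotp_gt0.
Qed.

Lemma cap_lower_le (R : rcfType) (n : nat) (a wh w b : 'rV[R]_n) : a != 0 ->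
  dotp w w <= dotp w wh -> dotp a a <= dotp a w ->
  2 * enorm b / enorm wh * rho a wh < dotp a b ->
  - (dotp a b / enorm a ^+ 2) * rho a wh + dotp wh b / 2
    - enorm (perp a b) * sqrt_term a wh <= dotp w b.
Proof.
move=> a0 w_ball w_half angle.
have W_gt0 := enorm_center_gt0 a0 w_ball w_half.
set z := w - 2^-1 *: wh; set r := enorm wh / 2.
have r_gt0 : 0 < r by rewrite divr_gt0.
have z_ball : dotp z z <= r ^+ 2.
  rewrite -enorm_sqr ler_pXn2r ?nnegrE ?enorm_ge0 ?(ltW r_gt0) //.
  exact: ball_center_dist.
have t_ge : - rho a wh <= dotp a z by rewrite /rho /z enorm_sqr dotpBr dotpZr; lra.
have angle_r : enorm b * rho a wh < dotp a b * r.
  have -> : enorm b * rho a wh = 2 * enorm b / enorm wh * rho a wh * r.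
    by rewrite /r; field; rewrite gt_eqF.
  by rewrite ltr_pM2r.
have := dotp_cap_ge a0 (ltW r_gt0) z_ball t_ge angle_r.
have -> : r ^+ 2 = enorm wh ^+ 2 / 4 by rewrite expr_div_n -natrX.
rewrite /z dotpBl dotpZl -/(sqrt_term a wh); lra.
Qed.

Lemma cap_upper_ge (R : rcfType) (n : nat) (a wh w b : 'rV[R]_n) : a != 0 ->
  dotp w w <= dotp w wh -> dotp a a <= dotp a w ->
  dotp a b < - (2 * enorm b / enorm wh) * rho a wh ->
  dotp w b <= - (dotp a b / enorm a ^+ 2) * rho a wh + dotp wh b / 2
    + enorm (perp a b) * sqrt_term a wh.
Proof.
move=> a0 w_ball w_half angle.
have angleN : 2 * enorm (- b) / enorm wh * rho a wh < dotp a (- b).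
  by rewrite enormN dotpNr; lra.
have := cap_lower_le a0 w_ball w_half angleN.
by rewrite perpN enormN !dotpNr; lra.
Qed.

Theorem theorem5 (R : rcfType) (n l : nat)
  (x : 'I_l -> 'rV[R]_n) (y : 'I_l -> R)
  (hy : forall i, y i = 1 \/ y i = -1)
  (sa sb : R) (wa wh : 'rV[R]_n)
  (hsb : 0 < sb) (hsab : sb < sa)
  (hwa : optimal x y sa wa) (hwa0 : wa != 0)
  (hwh : feasible x y sb wh) :
  forall s : R, sb <= s <= sa ->
  forall ws : 'rV[R]_n, optimal x y s ws ->
  forall i : 'I_l,
    (dotp wa (xbar x y i) > 2 * enorm (xbar x y i) / enorm wh * rho wa wh ->
     lower_i x y wa wh i > 1 -> dotp ws (xbar x y i) > 1) /\
    (upper_i x y wa wh i < 1 -> dotp ws (xbar x y i) < 1).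
Proof.
move=> s /andP[sb_le s_le] ws ws_opt i.
have ws_ball : dotp ws ws <= dotp ws wh := optimal_dotp_le ws_opt (feasible_le sb_le hwh).
have ws_half : dotp wa wa <= dotp wa ws := optimal_dotp_le hwa (feasible_le s_le ws_opt.1).
split=> [angle lower_gt1 | ].
  exact: lt_le_trans lower_gt1 (cap_lower_le hwa0 ws_ball ws_half angle).
rewrite /upper_i; case: ifP => [_ | /negbT angle] upper_lt1; apply: le_lt_trans upper_lt1.
  exact: dotp_ball_le.
by apply: cap_upper_ge; rewrite // ltNge.
Qed.
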